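(* Let $A$ be an algebra over a field $\mathbb{F}$ with more than two elements such that $A_A$ (the algebra viewed as a right module over itself) is automorphism-invariant. Then $A$ is right self-injective.
   Context: Algebras are associative with identity. $E(M)$ denotes the injective hull of a module $M$. A module $M$ is automorphism-invariant if $\sigma(M)\subseteq M$ for every automorphism $\sigma$ of $E(M)$. A ring $A$ is right self-injective if $A_A$ is an injective right $A$-module. *)

(* Right A-modules are represented as left modules over the
   converse ring A^c (i.e. objects of lmodType A^c): for m : M, a : A^c,
   a *: m stands for the right action m.a. *)
From HB Require Import structures.
From mathcomp Require Import all_boot all_order all_algebra.
Set Implicit Arguments. Unset Strict Implicit. Unset Printing Implicit Defensive.
Import GRing.Theory.
Local Open Scope ring_scope.

Definition is_hom (R : pzRingType) (M N : lmodType R) (f : M -> N) : Prop :=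
  forall (a : R) (x y : M), f (a *: x + y) = a *: f x + f y.

Definition is_submod (R : pzRingType) (M : lmodType R) (S : M -> Prop) : Prop :=
  [/\ S 0, (forall x y, S x -> S y -> S (x + y)) & (forall a x, S x -> S (a *: x))].

Definition injective_module (R : pzRingType) (E : lmodType R) : Prop :=
  forall (M N : lmodType R) (i : M -> N) (f : M -> E),
    is_hom i -> injective i -> is_hom f ->
    exists g : N -> E, is_hom g /\ forall x, g (i x) = f x.

Definition essential_mono (R : pzRingType) (M E : lmodType R) (i : M -> E) : Prop :=
  [/\ is_hom i, injective i &
   forall S : E -> Prop, is_submod S -> (exists e, S e /\ e <> 0) ->
     exists x, S (i x) /\ i x <> 0].

Definition injective_hull (R : pzRingType) (M E : lmodType R) (i : M -> E) : Prop :=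
  injective_module E /\ essential_mono i.

Definition is_automorphism (R : pzRingType) (E : lmodType R) (s : E -> E) : Prop :=
  is_hom s /\ bijective s.

Definition automorphism_invariant (R : pzRingType) (M : lmodType R) : Prop :=
  exists (E : lmodType R) (i : M -> E), injective_hull i /\
    forall s : E -> E, is_automorphism s ->
      forall x : M, exists y : M, s (i x) = i y.

(* The right regular module A_A, as a left A^c-module: a *: x = x * a. *)
Definition regular_right_module (A : pzRingType) : lmodType (A^c) := (A^c)^o.

From HB Require Import structures.
From mathcomp Require Import all_boot all_order all_algebra.
From mathcomp Require Import boolp classical_sets.
Import GRing.Theory.
Local Open Scope ring_scope.
Set Implicit Arguments. Unset Strict Implicit.

(* Let [M] be a submodule of an injective module [E], essential or not, that
   is invariant under every automorphism of [E].  We show that [M] is then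
   invariant under EVERY endomorphism of [E], provided the ring has a central
   [lam] with [lam] and [1 - lam] invertible.  Modulo the ideal [rad] of
   endomorphisms with essential kernel (the Jacobson radical of End(E)), the
   endomorphisms preserving [M] contain the units, hence [rad], every [f] with
   [f^2] in [rad], and, thanks to [lam], every [p] idempotent modulo [rad]
   (as [lam + (1 - lam) p] is a unit).  Choosing a maximal isomorphism
   between independent submodules [X ~ Y] and a complement [Z] of [X + Y],
   which is then square-free, every endomorphism splits into nine blocks
   modulo [rad]; each block is handled by one of the facts above.
   Applied to the regular module [A_A] inside its injective hull [E], the
   endomorphism extending [r |-> r e] shows that [e] lies in [A], so [A] is
   isomorphic to [E] and hence injective. *)

Section Homomorphisms.
Variables (R : pzRingType) (M N : lmodType R) (f : M -> N).
Hypothesis hf : is_hom f.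

Lemma hom0 : f 0 = 0.
Proof.
have h := hf 1 0 0; rewrite !scale1r addr0 in h.
by apply: (addrI (f 0)); rewrite addr0 -h.
Qed.
Lemma homD x y : f (x + y) = f x + f y.
Proof. by have := hf 1 x y; rewrite !scale1r. Qed.
Lemma homZ a x : f (a *: x) = a *: f x.
Proof. by have := hf a x 0; rewrite addr0 hom0 addr0. Qed.
Lemma homN x : f (- x) = - f x.
Proof. by rewrite -scaleN1r homZ scaleN1r. Qed.
Lemma homB x y : f (x - y) = f x - f y.
Proof. by rewrite homD homN. Qed.

Lemma hom_inj_ker : (forall x, f x = 0 -> x = 0) -> injective f.
Proof.
move=> ker0 x y e; apply/eqP; rewrite -subr_eq0; apply/eqP; apply: ker0.
by rewrite homB e subrr.
Qed.
End Homomorphisms.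

Section Central.
Variable R : pzRingType.

Definition central (c : R) := forall r, c * r = r * c.

Lemma central1 : central 1. Proof. by move=> r; rewrite mul1r mulr1. Qed.
Lemma centralB a b : central a -> central b -> central (a - b).
Proof. by move=> ha hb r; rewrite mulrBl mulrBr ha hb. Qed.
Lemma centralM a b : central a -> central b -> central (a * b).
Proof. by move=> ha hb r; rewrite -mulrA hb mulrA ha mulrA. Qed.
End Central.

Section Endomorphisms.
Variables (R : pzRingType) (E : lmodType R).
Implicit Types (f g : E -> E).

Lemma hom_id : is_hom (@id E). Proof. by []. Qed.
Lemma hom_comp f g : is_hom f -> is_hom g -> is_hom (f \o g).
Proof. by move=> hf hg a x y /=; rewrite hg hf. Qed.
Lemma hom_add f g : is_hom f -> is_hom g -> is_hom (fun x => f x + g x).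
Proof.
move=> hf hg a x y; rewrite hf hg scalerDr -!addrA; congr (_ + _).
by rewrite addrCA.
Qed.
Lemma hom_opp f : is_hom f -> is_hom (fun x => - f x).
Proof. by move=> hf a x y; rewrite hf opprD scalerN. Qed.
Lemma hom_sub f g : is_hom f -> is_hom g -> is_hom (fun x => f x - g x).
Proof. by move=> hf hg; apply: hom_add => //; apply: hom_opp. Qed.
Lemma hom_zero : is_hom (fun _ : E => 0 : E).
Proof. by move=> a x y; rewrite scaler0 addr0. Qed.
Lemma hom_scale (c : R) : central c -> is_hom (fun x : E => c *: x).
Proof. by move=> cc a x y; rewrite scalerDr !scalerA cc. Qed.
Lemma hom_ext f g : (forall x, f x = g x) -> is_hom f -> is_hom g.
Proof. by move=> e hf a x y; rewrite -!e. Qed.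
End Endomorphisms.

Section Submodules.
Variables (R : pzRingType) (E : lmodType R).
Implicit Types (A B C L : E -> Prop) (x y v : E).

Definition sum_sub A B v := exists a b, [/\ A a, B b & v = a + b].
Definition indep A B := forall v, A v -> B v -> v = 0.
Definition cyclic_sub x v := exists a, v = a *: x.
Definition essential L := forall x, x != 0 -> exists a, L (a *: x) /\ a *: x != 0.

Lemma sub0 A : is_submod A -> A 0. Proof. by case. Qed.
Lemma subD A x y : is_submod A -> A x -> A y -> A (x + y).
Proof. by case=> _ h _; apply: h. Qed.
Lemma subZ A a x : is_submod A -> A x -> A (a *: x).
Proof. by case=> _ _ h; apply: h. Qed.
Lemma subN A x : is_submod A -> A x -> A (- x).
Proof. by move=> hA Ax; rewrite -scaleN1r; apply: subZ. Qed.
Lemma subB A x y : is_submod A -> A x -> A y -> A (x - y).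
Proof. by move=> hA Ax Ay; apply: subD => //; apply: subN. Qed.

Lemma submod_sum A B : is_submod A -> is_submod B -> is_submod (sum_sub A B).
Proof.
move=> hA hB; split.
- by exists 0, 0; rewrite addr0; split => //; apply: sub0.
- move=> _ _ [a [b [Aa Bb ->]]] [a' [b' [Aa' Bb' ->]]].
  by exists (a + a'), (b + b'); split; [apply: subD | apply: subD | rewrite addrACA].
- move=> k _ [a [b [Aa Bb ->]]].
  by exists (k *: a), (k *: b); split; [apply: subZ | apply: subZ | rewrite scalerDr].
Qed.

Lemma submod_cyclic x : is_submod (cyclic_sub x).
Proof.
split; first by exists 0; rewrite scale0r.
- by move=> _ _ [a ->] [b ->]; exists (a + b); rewrite scalerDl.
- by move=> k _ [a ->]; exists (k * a); rewrite scalerA.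
Qed.

Lemma sum_subl A B x : is_submod B -> A x -> sum_sub A B x.
Proof. by move=> hB Ax; exists x, 0; split => //; [apply: sub0 | rewrite addr0]. Qed.
Lemma sum_subr A B x : is_submod A -> B x -> sum_sub A B x.
Proof. by move=> hA Bx; exists 0, x; split => //; [apply: sub0 | rewrite add0r]. Qed.

Lemma indep_sym A B : indep A B -> indep B A.
Proof. by move=> h v Bv Av; apply: h. Qed.

Lemma indep_uniq A B a a' b b' : is_submod A -> is_submod B -> indep A B ->
  A a -> A a' -> B b -> B b' -> a + b = a' + b' -> a = a' /\ b = b'.
Proof.
move=> hA hB iAB Aa Aa' Bb Bb' e.
have h : a - a' = b' - b by rewrite -[a](addrK b) e [a' + b']addrC addrAC addrK.
have z : a - a' = 0 by apply: iAB; [apply: subB | rewrite h; apply: subB].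
split; first by apply/eqP; rewrite -subr_eq0 z.
by apply/eqP; rewrite eq_sym -subr_eq0 -h z.
Qed.

Lemma indep_sum_neq0 A B a b : is_submod A -> indep A B -> A a -> B b -> b != 0 ->
  a + b != 0.
Proof.
move=> hA iAB Aa Bb nb; apply/eqP => e; move/eqP: nb; apply.
apply: iAB => //; have -> : b = - a by apply/eqP; rewrite -addr_eq0 addrC e.
exact: subN.
Qed.

Lemma essential_mono L L' : essential L -> (forall x, L x -> L' x) -> essential L'.
Proof. by move=> eL s x nx; have [a [La nz]] := eL x nx; exists a; split=> //; apply: s. Qed.

Lemma essential_zero L (P : E -> Prop) : essential L ->
  (forall a x, P x -> P (a *: x)) -> (forall x, P x -> L x -> x = 0) ->
  forall x, P x -> x = 0.
Proof.
move=> eL cP h x Px; apply/eqP/negP => /negP nx.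
have [a [La nz]] := eL x nx.
by move: nz; rewrite (h _ (cP _ _ Px) La) eqxx.
Qed.

Lemma essential_inter L1 L2 : essential L1 -> essential L2 ->
  (forall a x, L1 x -> L1 (a *: x)) -> essential (fun x => L1 x /\ L2 x).
Proof.
move=> e1 e2 c1 x nx; have [a [L1a nz]] := e1 x nx.
have [b [L2b nzb]] := e2 _ nz; exists (b * a); rewrite -scalerA; split => //.
by split => //; apply: c1.
Qed.

Lemma essential_preim L s : is_hom s -> essential L ->
  (forall a x, L x -> L (a *: x)) -> L 0 -> essential (fun x => L (s x)).
Proof.
move=> hs eL cL L0 x nx; case: (eqVneq (s x) 0) => sx.
  by exists 1; rewrite scale1r sx; split.
have [a [La nz]] := eL _ sx; exists a; rewrite homZ //; split => //.
by apply: contraNneq nz => h; rewrite -homZ // h hom0.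
Qed.
End Submodules.

(* For injective [E] they form the
   Jacobson radical of End(E); we only need that they form a two-sided ideal
   and that [1 + j] is invertible for each of them. *)
Section Radical.
Variables (R : pzRingType) (E : lmodType R).
Implicit Types (f g j s : E -> E) (L : E -> Prop).

Definition rad f := is_hom f /\ essential (fun x => f x = 0).

Definition rad_eq f g := rad (fun x => f x - g x).

Lemma rad0 : rad (fun _ => 0).
Proof. by split; [exact: hom_zero | move=> x nx; exists 1; rewrite scale1r]. Qed.

Lemma rad_ext f g : (forall x, f x = g x) -> rad f -> rad g.
Proof.
move=> e [hf ef]; split; first exact: hom_ext hf.
by apply: essential_mono ef _ => x; rewrite e.
Qed.

Lemma rad_add f g : rad f -> rad g -> rad (fun x => f x + g x).
Proof.
move=> [hf ef] [hg eg]; split; first exact: hom_add.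
apply: essential_mono (essential_inter ef eg _) _.
  by move=> a x fx; rewrite homZ // fx scaler0.
by move=> x [-> ->]; rewrite addr0.
Qed.

Lemma rad_opp f : rad f -> rad (fun x => - f x).
Proof.
move=> [hf ef]; split; first exact: hom_opp.
by apply: essential_mono ef _ => x ->; rewrite oppr0.
Qed.

Lemma rad_compl f s : rad f -> is_hom s -> rad (s \o f).
Proof.
move=> [hf ef] hs; split; first exact: hom_comp.
by apply: essential_mono ef _ => x /= ->; rewrite hom0.
Qed.

Lemma rad_compr f s : rad f -> is_hom s -> rad (f \o s).
Proof.
move=> [hf ef] hs; split; first exact: hom_comp.
apply: (@essential_preim _ _ (fun x => f x = 0)) => //; last exact: hom0.
by move=> a x fx; rewrite homZ // fx scaler0.
Qed.

Lemma rad_eq_essential f g L : is_hom f -> is_hom g -> essential L ->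
  (forall x, L x -> f x = g x) -> rad_eq f g.
Proof.
move=> hf hg eL e; split; first exact: hom_sub.
by apply: essential_mono eL _ => x Lx; rewrite e // subrr.
Qed.

Lemma rad_eq_refl f : is_hom f -> rad_eq f f.
Proof. by move=> hf; apply: rad_ext rad0 => x; rewrite subrr. Qed.

Lemma rad_eq_comp s s' t t' : is_hom s -> is_hom t' ->
  rad_eq s s' -> rad_eq t t' -> rad_eq (s \o t) (s' \o t').
Proof.
move=> hs ht' h1 h2.
apply: rad_ext (rad_add (rad_compl h2 hs) (rad_compr h1 ht')) => x /=.
by rewrite (homB hs) addrA subrK.
Qed.
End Radical.

Section SubmoduleType.
Variables (R : pzRingType) (E : lmodType R) (P : E -> Prop).
Hypothesis sP : is_submod P.

Definition submod_pred : {pred E} := fun x => `[< P x >].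

Fact submod_pred_closed : GRing.submod_closed submod_pred.
Proof.
case: sP => P0 PD PZ; split; first exact/asboolP.
by move=> a x y /asboolP Px /asboolP Py; apply/asboolP/PD => //; apply: PZ.
Qed.

HB.instance Definition _ := GRing.isSubmodClosed.Build R E submod_pred submod_pred_closed.
Definition submod_type of is_submod P := {x : E | x \in submod_pred}.
HB.instance Definition _ := [isSub of submod_type sP for @sval _ _].
HB.instance Definition _ := Choice.on (submod_type sP).
HB.instance Definition _ := [SubChoice_isSubLmodule of submod_type sP by <:].
End SubmoduleType.

Section InjectiveModule.
Variables (R : pzRingType) (E : lmodType R).
Hypothesis Einj : injective_module E.
Implicit Types (f v w j p : E -> E) (A B P : E -> Prop).

Lemma hom_extend P f : is_submod P ->
  (forall a x y, P x -> P y -> f (a *: x + y) = a *: f x + f y) ->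
  exists g, is_hom g /\ forall x, P x -> g x = f x.
Proof.
move=> sP hf.
have [|||g [hg eg]] := @Einj (submod_type sP) E val (f \o val).
- by move=> a x y; rewrite linearP.
- exact: val_inj.
- by move=> a x y /=; apply: hf; [move: (valP x) | move: (valP y)] => /asboolP.
exists g; split => // x Px.
by have := eg (exist _ x (introT (asboolP _) Px)).
Qed.

(* An injective endomorphism [v] with essential image is an automorphism: a
   left inverse [g] of [v] has a kernel meeting the image trivially, so the
   kernel is zero and [v (g y) = y]. *)
Lemma bij_essential_image v : is_hom v -> injective v ->
  essential (fun y => exists x, y = v x) -> bijective v.
Proof.
move=> hv iv ev.
have [||| g [hg eg]] := @Einj E E v id => //.
exists g => // y; set z := y - v (g y).
suff : z = 0 by move/eqP; rewrite subr_eq0 => /eqP.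
apply/eqP/negP => /negP nz; have [a [[m em] na]] := ev z nz.
have : g (a *: z) = 0 by rewrite homZ // homB // eg subrr scaler0.
by rewrite em eg => m0; move: na; rewrite em m0 hom0 // eqxx.
Qed.

Lemma rad_unit j : rad j -> bijective (fun x => x + j x).
Proof.
move=> [hj ej]; have h1 : is_hom (fun x => x + j x) by apply: hom_add.
apply: bij_essential_image => //.
- apply: hom_inj_ker => // x x0.
  apply: (@essential_zero _ _ _ (fun z => z + j z = 0) ej) x0.
    by move=> a z; rewrite homZ // -scalerDr => ->; rewrite scaler0.
  by move=> z zj jz; rewrite jz addr0 in zj.
- move=> y ny; have [a [ja na]] := ej y ny; exists a; split => //.
  by exists (a *: y); rewrite ja addr0.
Qed.

Lemma unit_mod_rad v w j j' : is_hom v -> is_hom w -> rad j -> rad j' ->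
  (forall x, v (w x) = x + j x) -> (forall x, w (v x) = x + j' x) -> bijective v.
Proof.
move=> hv hw Jj Jj' e1 e2.
have [k k1 k2] := rad_unit Jj; have [k' k1' k2'] := rad_unit Jj'.
have vr : cancel (w \o k) v by move=> y /=; rewrite e1; exact: k2.
have lv : cancel v (k' \o w) by move=> x /=; rewrite e2; exact: k1'.
exists (w \o k) => // x.
by rewrite -{2}(lv x) -{2}(vr (v x)) lv.
Qed.

Lemma projection_exists A B : is_submod A -> is_submod B -> indep A B ->
  exists p, is_hom p /\ forall a b, A a -> B b -> p (a + b) = a.
Proof.
move=> hA hB iAB.
pose f (e : E) := xget 0 (fun a => A a /\ exists b, B b /\ e = a + b).
have fv a b : A a -> B b -> f (a + b) = a.
  move=> Aa Bb; apply: xget_unique; first by split => //; exists b.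
  move=> a' [Aa' [b' [Bb' e]]].
  by have [] := indep_uniq hA hB iAB Aa' Aa Bb' Bb (esym e).
have [|g [hg eg]] := @hom_extend (sum_sub A B) f (submod_sum hA hB).
  move=> k _ _ [a [b [Aa Bb ->]]] [a' [b' [Aa' Bb' ->]]].
  rewrite (_ : k *: (a + b) + (a' + b') = (k *: a + a') + (k *: b + b')).
    by rewrite !fv //; apply: subD => //; apply: subZ.
  by rewrite scalerDr addrACA.
by exists g; split => // a b Aa Bb; rewrite eg ?fv //; exists a, b.
Qed.
End InjectiveModule.

Section Chains.
Variable T : Type.
Implicit Types (S : T -> Prop) (F : (T -> Prop) -> Prop).

Definition chain F := forall S (S' : T -> Prop), F S -> F S' ->
  (forall x, S x -> S' x) \/ (forall x, S' x -> S x).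
Definition union F x := exists S, F S /\ S x.

Lemma chain_union2 F x y : chain F -> union F x -> union F y ->
  exists S, [/\ F S, S x & S y].
Proof.
move=> cF [S [FS Sx]] [S' [FS' Sy]].
case: (cF S S' FS FS') => h; first by exists S'; split => //; apply: h.
by exists S; split => //; apply: h.
Qed.

Lemma zorn_chain (P : (T -> Prop) -> Prop) S0 : P S0 ->
  (forall F, (forall S, F S -> P S) -> chain F -> (exists S, F S) -> P (union F)) ->
  exists S, P S /\ forall S' : T -> Prop, P S' -> (forall x, S x -> S' x) -> forall x, S' x -> S x.
Proof.
move=> P0 hU.
pose Rsub (s t : {S | P S}) := `[< forall x, sval s x -> sval t x >].
have [||| t tmax] := @ZL_preorder _ (exist _ S0 P0) Rsub.
- by move=> s; apply/asboolP.
- by move=> r s t /asboolP h1 /asboolP h2; apply/asboolP => x /h1 /h2.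
- move=> G Gtot; case: (pselect (exists s, G s)) => [[s0 Gs0] | nG]; last first.
    by exists (exist _ S0 P0) => s Gs; case: nG; exists s.
  pose F S := exists s, G s /\ sval s = S.
  have PF : P (union F).
    apply: hU; first by move=> S [s [_ <-]]; apply: (svalP s).
      move=> S S' [s [Gs <-]] [s' [Gs' <-]].
      by case: (Gtot s s' Gs Gs') => /asboolP h; [left | right].
    by exists (sval s0), s0.
  exists (exist _ _ PF) => s Gs; apply/asboolP => x sx /=.
  by exists (sval s); split => //; exists s.
- exists (sval t); split; first exact: svalP.
  by move=> S' PS' tS'; have /asboolP := tmax (exist _ S' PS') (introT (asboolP _) tS').
Qed.
End Chains.

Lemma submod_union (R : pzRingType) (E : lmodType R) (F : (E -> Prop) -> Prop) :
  (forall S, F S -> is_submod S) -> chain F -> (exists S, F S) -> is_submod (union F).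
Proof.
move=> hF cF [S0 FS0]; split; first by exists S0; split => //; apply: sub0; apply: hF.
- move=> x y ux uy; have [S [FS Sx Sy]] := chain_union2 cF ux uy.
  by exists S; split => //; apply: subD => //; apply: hF.
- by move=> a x [S [FS Sx]]; exists S; split => //; apply: subZ => //; apply: hF.
Qed.

Lemma complement_exists (R : pzRingType) (E : lmodType R) (N B : E -> Prop) :
  is_submod N -> is_submod B ->
  exists C, [/\ is_submod C, (forall v, C v -> B v), indep C N &
    forall z, B z -> z != 0 -> exists b, sum_sub N C (b *: z) /\ b *: z != 0].
Proof.
move=> hN hB.
pose P C := [/\ is_submod C, (forall v, C v -> B v) & indep C N].
have P0 : P (fun v => v = 0).
  split; [split => // | by move=> v ->; apply: sub0 | by move=> v ->].
    by move=> x y -> ->; rewrite addr0.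
  by move=> a x ->; rewrite scaler0.
have [|C [[hC CB iC] Cmax]] := zorn_chain P0.
  move=> F FP cF nF; split; first by apply: submod_union => // S /FP [].
    by move=> v [S [FS Sv]]; have [_ h _] := FP _ FS; apply: h.
  by move=> v [S [FS Sv]]; have [_ _ h] := FP _ FS; apply: h.
exists C; split => // z Bz nz; apply: contrapT => hno.
have hno' b : sum_sub N C (b *: z) -> b *: z = 0.
  by move=> hs; apply/eqP; apply: contrapT => /negP nb; apply: hno; exists b.
(* otherwise [C + Rz] would be a larger complement *)
have PC' : P (sum_sub C (cyclic_sub z)).
  split; first by apply: submod_sum => //; apply: submod_cyclic.
  - by move=> _ [c [_ [Cc [b ->] ->]]]; apply: subD => //; [exact: CB | exact: subZ].
  - move=> _ [c [_ [Cc [b ->] ->]]] Nv.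
    have bz : b *: z = 0.
      apply: hno'; exists (c + b *: z), (- c); split => //; first exact: subN.
      by rewrite addrC addKr.
    by rewrite bz addr0; apply: iC => //; rewrite bz addr0 in Nv.
have zC : C z.
  apply: (Cmax _ PC'); first by move=> v Cv; apply: sum_subl => //; apply: submod_cyclic.
  by exists 0, z; split; [apply: sub0 | exists 1; rewrite scale1r | rewrite add0r].
by move: nz; rewrite -[z]scale1r hno' ?eqxx //; apply: sum_subr; rewrite ?scale1r.
Qed.

(* Partial isomorphisms between independent submodules, encoded by their
   graphs [S] in [E * E].  A maximal one splits off a square-free part. *)
Section PartialIsomorphisms.
Variables (R : pzRingType) (E : lmodType R).
Implicit Types (S : E * E -> Prop) (Q Z : E -> Prop) (h : E -> E) (x y : E).

Definition domain S v := exists y, S (v, y).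
Definition range S v := exists x, S (x, v).

Definition partial_iso S :=
  [/\ is_submod S, (forall y, S (0, y) -> y = 0), (forall x, S (x, 0) -> x = 0)
    & indep (domain S) (range S)].

(* [Z] contains no nonzero submodule [Q] isomorphic, via some [h], to a
   submodule [h Q] of [Z] independent of [Q]. *)
Definition square_free Z := forall Q h,
  is_submod Q -> is_hom h -> (forall q, Q q -> Z q) -> (forall q, Q q -> Z (h q)) ->
  (forall q, Q q -> h q = 0 -> q = 0) ->
  (forall q q', Q q -> Q q' -> q = h q' -> q = 0) -> forall q, Q q -> q = 0.

Lemma domain_submod S : is_submod S -> is_submod (domain S).
Proof.
move=> hS; split; first by exists 0; apply: (sub0 hS).
- by move=> x x' [y Sy] [y' Sy']; exists (y + y'); apply: (subD hS Sy Sy').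
- by move=> a x [y Sy]; exists (a *: y); apply: (subZ a hS Sy).
Qed.

Lemma range_submod S : is_submod S -> is_submod (range S).
Proof.
move=> hS; split; first by exists 0; apply: (sub0 hS).
- by move=> y y' [x Sx] [x' Sx']; exists (x + x'); apply: (subD hS Sx Sx').
- by move=> a y [x Sx]; exists (a *: x); apply: (subZ a hS Sx).
Qed.

Lemma partial_iso_fun S x y y' : partial_iso S -> S (x, y) -> S (x, y') -> y = y'.
Proof.
move=> [hS f0 _ _] s1 s2; apply/eqP; rewrite -subr_eq0; apply/eqP/f0.
by rewrite -(subrr x); apply: (subB hS s1 s2).
Qed.

Lemma partial_iso_inj S x x' y : partial_iso S -> S (x, y) -> S (x', y) -> x = x'.
Proof.
move=> [hS _ i0 _] s1 s2; apply/eqP; rewrite -subr_eq0; apply/eqP/i0.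
by rewrite -(subrr y); apply: (subB hS s1 s2).
Qed.

Lemma partial_iso_maximal : exists S, partial_iso S /\
  forall S', partial_iso S' -> (forall p, S p -> S' p) -> forall p, S' p -> S p.
Proof.
have P0 : partial_iso (fun p => p = (0, 0)).
  split => //; last by move=> v [y [-> _]].
  - split => //; first by move=> _ _ -> ->; rewrite addr0.
    by move=> a _ ->; rewrite scaler0.
  - by move=> y [->].
  - by move=> x [->].
apply: (zorn_chain (P := partial_iso) P0) => F FP cF nF; split.
- by apply: submod_union => // S /FP [].
- by move=> y [S [FS Sy]]; have [_ h _ _] := FP _ FS; apply: h.
- by move=> x [S [FS Sx]]; have [_ _ h _] := FP _ FS; apply: h.
- move=> v [y uy] [x ux]; have [S [FS Sy Sx]] := chain_union2 cF uy ux.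
  by have [_ _ _ h] := FP _ FS; apply: h; [exists y | exists x].
Qed.

Section Extension.
Variables (S : E * E -> Prop) (Z Q : E -> Prop) (h : E -> E).
Hypotheses (pS : partial_iso S) (hZ : is_submod Z)
  (iZ : indep Z (sum_sub (domain S) (range S))).
Hypotheses (hQ : is_submod Q) (hh : is_hom h) (QZ : forall q, Q q -> Z q)
  (hQZ : forall q, Q q -> Z (h q)) (hinj : forall q, Q q -> h q = 0 -> q = 0)
  (hindep : forall q q', Q q -> Q q' -> q = h q' -> q = 0).

Definition extended_graph p := exists x y q, [/\ S (x, y), Q q & p = (x + q, y + h q)].

Let hS : is_submod S. Proof. by case: pS. Qed.
Let hN := submod_sum (domain_submod hS) (range_submod hS).
Let iNZ := indep_sym iZ.

Let dom_sum x y : S (x, y) -> sum_sub (domain S) (range S) x.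
Proof. by move=> Sxy; apply: sum_subl; [apply: range_submod | exists y]. Qed.
Let ran_sum x y : S (x, y) -> sum_sub (domain S) (range S) y.
Proof. by move=> Sxy; apply: sum_subr; [apply: domain_submod | exists x]. Qed.

Let sum_eq0 n z : sum_sub (domain S) (range S) n -> Z z -> n + z = 0 -> n = 0 /\ z = 0.
Proof.
move=> Nn Zz e; apply: (indep_uniq hN hZ iNZ Nn (sub0 hN) Zz (sub0 hZ)).
by rewrite e addr0.
Qed.

Lemma extended_graph_partial_iso : partial_iso extended_graph.
Proof.
have [_ f0 i0 iS] := pS.
split.
- split; first by exists 0, 0, 0; split;
    [exact: (sub0 hS) | exact: sub0 | rewrite (hom0 hh) !addr0].
  + move=> _ _ [x [y [q [Sxy Qq ->]]]] [x' [y' [q' [Sxy' Qq' ->]]]].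
    exists (x + x'), (y + y'), (q + q'); split; [exact: (subD hS Sxy Sxy') | exact: subD |].
    by rewrite (homD hh); congr (_, _); apply: addrACA.
  + move=> a _ [x [y [q [Sxy Qq ->]]]].
    exists (a *: x), (a *: y), (a *: q); split; [exact: (subZ a hS Sxy) | exact: subZ |].
    by rewrite (homZ hh) -!scalerDr.
- move=> _ [x [y [q [Sxy Qq [e0 ->]]]]].
  have [x0 q0] := sum_eq0 (dom_sum Sxy) (QZ Qq) (esym e0).
  by subst; rewrite (hom0 hh) addr0; apply: f0.
- move=> _ [x [y [q [Sxy Qq [-> e0]]]]].
  have [y0 hq0] := sum_eq0 (ran_sum Sxy) (hQZ Qq) (esym e0).
  by subst; rewrite (hinj Qq hq0) addr0; apply: i0.
- move=> _ [_ [x [y [q [Sxy Qq [-> _]]]]]] [_ [x2 [y2 [q2 [Sxy2 Qq2 [_ e2]]]]]].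
  have [ex eq] := indep_uniq hN hZ iNZ (dom_sum Sxy) (ran_sum Sxy2) (QZ Qq) (hQZ Qq2) e2.
  have x0 : x = 0 by apply: iS; [exists y | rewrite ex; exists x2].
  by rewrite x0 (hindep Qq Qq2 eq) addr0.
Qed.
End Extension.

Lemma maximal_square_free S Z : partial_iso S ->
  (forall S', partial_iso S' -> (forall p, S p -> S' p) -> forall p, S' p -> S p) ->
  is_submod Z -> indep Z (sum_sub (domain S) (range S)) -> square_free Z.
Proof.
move=> pS Smax hZ iZ Q h hQ hh QZ hQZ hinj hindep q Qq.
have pS' := extended_graph_partial_iso pS hZ iZ hQ hh QZ hQZ hinj hindep.
have [hS _ _ _] := pS.
have SS' p : S p -> extended_graph S Q h p.
  case: p => x y Sxy; exists x, y, 0; split => //; first exact: sub0.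
  by rewrite (hom0 hh) !addr0.
have Sq : S (q, h q).
  by apply: (Smax _ pS' SS'); exists 0, 0, q; split => //; [apply: (sub0 hS) | rewrite !add0r].
apply: iZ; first exact: QZ.
by apply: sum_subl; [apply: range_submod | exists (h q)].
Qed.
End PartialIsomorphisms.

(* The block [t = pZ w pZ] of an endomorphism [w] on a square-free summand [Z]
   (with [N + Z] essential, [pZ] the projection onto [Z]) factors modulo the
   radical as an automorphism [psi] times an endomorphism [rho] idempotent
   modulo the radical.  Here [K] is the kernel of [t] on [Z], [C] a
   complement of [K] in [Z], [C1] the part of [C] sent into [N + Z] by [w],
   and [psi] acts as [t] on [C1] and as the identity on [N + K]. *)
Section SquareFreeBlock.
Variables (R : pzRingType) (E : lmodType R) (N Z : E -> Prop) (pZ w : E -> E).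
Hypotheses (Einj : injective_module E) (hN : is_submod N) (hZ : is_submod Z).
Hypotheses (eNZ : essential (sum_sub N Z)) (hpZ : is_hom pZ)
  (epZ : forall n z, N n -> Z z -> pZ (n + z) = z).
Hypotheses (sqZ : square_free Z) (hw : is_hom w).
Implicit Types (n z k c x v : E).

Let t := pZ \o w \o pZ.
Let ht : is_hom t. Proof. by do 2 apply: hom_comp. Qed.

Let pZ_N n : N n -> pZ n = 0.
Proof. by move=> Nn; rewrite -[n]addr0 epZ //; apply: sub0. Qed.
Let pZ_Z z : Z z -> pZ z = z.
Proof. by move=> Zz; rewrite -{1}[z]add0r epZ //; apply: sub0. Qed.
Let iNZ : indep N Z.
Proof. by move=> v Nv Zv; rewrite -(pZ_Z Zv) pZ_N. Qed.

Let K z := Z z /\ t z = 0.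
Let hK : is_submod K.
Proof.
split; first by split; [apply: sub0 | rewrite hom0].
- by move=> x y [Zx tx] [Zy ty]; split; [apply: subD | rewrite homD // tx ty addr0].
- by move=> a x [Zx tx]; split; [apply: subZ | rewrite homZ // tx scaler0].
Qed.

Section Complement.
Variable C : E -> Prop.
Hypotheses (hC : is_submod C) (CZ : forall c, C c -> Z c) (iCK : indep C K).
Hypothesis KC_ess :
  forall z, Z z -> z != 0 -> exists b, sum_sub K C (b *: z) /\ b *: z != 0.

Let C1 c := C c /\ sum_sub N Z (w c).
Let hC1 : is_submod C1.
Proof.
have hNZ := submod_sum hN hZ.
split; first by split; [apply: sub0 | rewrite hom0 //; apply: sub0].
- by move=> x y [Cx Lx] [Cy Ly]; split; [apply: subD | rewrite homD //; apply: subD].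
- by move=> a x [Cx Lx]; split; [apply: subZ | rewrite homZ //; apply: subZ].
Qed.

Let t_C1 c : C1 c -> Z (t c).
Proof. by move=> [Cc [n [z [Nn Zz ewc]]]]; rewrite /t /= (pZ_Z (CZ Cc)) ewc epZ. Qed.

Let t_C1_inj c : C1 c -> t c = 0 -> c = 0.
Proof. by move=> [Cc _] tc; apply: iCK => //; split => //; exact: CZ. Qed.

(* By square-freeness, [t] maps no nonzero element of [C1] into [K]. *)
Let t_C1_K c : C1 c -> K (t c) -> t c = 0.
Proof.
move=> C1c Ktc; suff -> : c = 0 by rewrite hom0.
apply: (sqZ (Q := fun c => C1 c /\ K (t c)) (h := t)) => //.
- split; first by split; [apply: sub0 | rewrite hom0 //; apply: sub0].
  + by move=> x y [C1x Kx] [C1y Ky]; split; [apply: subD | rewrite homD //; apply: subD].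
  + by move=> a x [C1x Kx]; split; [apply: subZ | rewrite homZ //; apply: subZ].
- by move=> q [[Cq _] _]; apply: CZ.
- by move=> q [_ [Zq _]].
- by move=> q [C1q _]; apply: t_C1_inj.
- by move=> q q' [[Cq _] _] [_ Kq'] eq; apply: iCK => //; rewrite eq.
Qed.

Let L1 := sum_sub N (sum_sub K C1).

Let L1_essential : essential L1.
Proof.
have iKC : indep K C by apply: indep_sym.
move=> v nv; have [a [[n [z [Nn Zz eav]]] nav]] := eNZ nv.
have hKC1 := submod_sum hK hC1.
case: (eqVneq z 0) => [z0 | nz].
  by exists a; split => //; rewrite eav z0 addr0; apply: sum_subl.
have [b [[k [c [Kk Cc ebz]]] nbz]] := KC_ess Zz nz.
have nbv : b *: n + b *: z != 0 by apply: (indep_sum_neq0 hN iNZ (subZ b hN Nn) (subZ b hZ Zz)).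
case: (eqVneq (w c) 0) => [wc0 | nwc].
  exists (b * a); rewrite -scalerA eav scalerDr; split => //.
  exists (b *: n), (k + c); split; first exact: subZ.
    by exists k, c; split => //; split => //; rewrite wc0; apply: sub0; apply: submod_sum.
  by rewrite ebz.
have [b' [Lb' nb']] := eNZ nwc.
have C1c' : C1 (b' *: c) by split; [apply: subZ | rewrite homZ].
have nc' : b' *: c != 0 by apply: contraNneq nb' => h; rewrite -homZ // h hom0.
exists (b' * (b * a)); rewrite -!scalerA eav scalerDr ebz !scalerDr; split.
  exists (b' *: (b *: n)), (b' *: k + b' *: c); split => //.
    exact: (subZ b' hN (subZ b hN Nn)).
  by exists (b' *: k), (b' *: c); split => //; exact: (subZ b' hK Kk).
apply: (indep_sum_neq0 hN iNZ); first exact: (subZ b' hN (subZ b hN Nn)).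
  by apply: subD => //; [apply: (subZ b' hZ); case: Kk | apply: (subZ b' hZ); apply: CZ].
by apply: (indep_sum_neq0 hK iKC); [exact: (subZ b' hK Kk) | exact: (subZ b' hC Cc) | exact: nc'].
Qed.

Let C1_indep : indep C1 (sum_sub N K).
Proof.
move=> v [Cv _] [n [k [Nn Kk ev]]].
have n0 : n = 0.
  apply: iNZ => //; rewrite (_ : n = v - k); last by rewrite ev addrK.
  by apply: subB => //; [apply: CZ | case: Kk].
by apply: iCK => //; rewrite ev n0 add0r.
Qed.

Section Projection.
Variable rho : E -> E.
Hypotheses (hrho : is_hom rho)
  (erho : forall c v, C1 c -> sum_sub N K v -> rho (c + v) = c).

Let rho_L1 n k c : N n -> K k -> C1 c -> rho (n + (k + c)) = c.
Proof. by move=> Nn Kk C1c; rewrite (addrC k) addrCA erho //; exists n, k. Qed.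
Let rho_C1 c : C1 c -> rho c = c.
Proof. by move=> C1c; have := rho_L1 (sub0 hN) (sub0 hK) C1c; rewrite !add0r. Qed.

Let psi x := x + (t (rho x) - rho x).
Let hpsi : is_hom psi.
Proof. by apply: hom_add => //; apply: hom_sub => //; apply: hom_comp. Qed.

Let psi_L1 n k c : N n -> K k -> C1 c -> psi (n + (k + c)) = n + (k + t c).
Proof. by move=> Nn Kk C1c; rewrite /psi rho_L1 // -!addrA (addrC c) subrK. Qed.
Let psi_KC1 k c : K k -> C1 c -> psi (k + c) = k + t c.
Proof. by move=> Kk C1c; have := psi_L1 (sub0 hN) Kk C1c; rewrite !add0r. Qed.

Let psi_ker x : psi x = 0 -> x = 0.
Proof.
apply: (@essential_zero _ _ _ (fun x => psi x = 0) L1_essential).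
  by move=> a y py; rewrite homZ // py scaler0.
move=> y py [n [_ [Nn [k [c [Kk C1c ->]]] ey]]]; subst y.
rewrite psi_L1 // in py.
have Zs : Z (k + t c) by apply: subD => //; [case: Kk | apply: t_C1].
have [n0 kt0] := indep_uniq hN hZ iNZ Nn (sub0 hN) Zs (sub0 hZ) (etrans py (esym (addr0 0))).
have Ktc : K (t c).
  by rewrite (_ : t c = - k); [apply: subN | apply/eqP; rewrite -addr_eq0 addrC kt0].
have tc0 := t_C1_K C1c Ktc.
by rewrite n0 (t_C1_inj C1c tc0) addr0 add0r; rewrite tc0 addr0 in kt0.
Qed.

(* An element none of whose nonzero multiples lies in the image of [psi]
   is zero: the parts in [K + C1] of its multiples form a submodule [Q] of [Z]
   independent of its isomorphic image [psi Q], so [Q = 0] by square-freeness. *)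
Section OutsideImage.
Variable v : E.
Hypothesis v_out : forall a x, a *: v = psi x -> a *: v = 0.

Let Q q := exists a n k c, [/\ N n, K k, C1 c, a *: v = n + (k + c) & q = k + c].

Let hQ : is_submod Q.
Proof.
split.
- by exists 0, 0, 0, 0; split; rewrite ?scale0r ?addr0 //; apply: sub0.
- move=> _ _ [a [n [k [c [Nn Kk Cc eav ->]]]]] [a' [n' [k' [c' [Nn' Kk' Cc' eav' ->]]]]].
  exists (a + a'), (n + n'), (k + k'), (c + c'); split; try exact: subD; last exact: addrACA.
  by rewrite scalerDl eav eav' addrACA; congr (_ + _); exact: addrACA.
- move=> b _ [a [n [k [c [Nn Kk Cc eav ->]]]]].
  exists (b * a), (b *: n), (b *: k), (b *: c); split; try exact: subZ; last exact: scalerDr.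
  by rewrite -scalerA eav !scalerDr.
Qed.

Let Q0 q : Q q -> q = 0.
Proof.
apply: (sqZ (h := psi)) => //.
- move=> _ [a [n [k [c [_ Kk [Cc _] _ ->]]]]].
  by apply: subD => //; [case: Kk | apply: CZ].
- move=> _ [a [n [k [c [_ Kk C1c _ ->]]]]].
  by rewrite psi_KC1 //; apply: subD => //; [case: Kk | apply: t_C1].
- by move=> q' _; apply: psi_ker.
- move=> _ _ [a [n [k [c [Nn Kk C1c eav ->]]]]] [a' [n' [k' [c' [Nn' Kk' C1c' _ ->]]]]] e.
  rewrite psi_KC1 // in e.
  have av0 : a *: v = 0 by apply: (v_out (x := n + (k' + c'))); rewrite psi_L1 // eav e.
  have Zs : Z (k + c) by apply: subD => //; [case: Kk | apply: CZ; case: C1c].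
  have e0 : n + (k + c) = 0 + 0 by rewrite -eav av0 addr0.
  by have [_ ->] := indep_uniq hN hZ iNZ Nn (sub0 hN) Zs (sub0 hZ) e0.
Qed.

Lemma outside_image_zero : v = 0.
Proof.
apply/eqP/negP => /negP nv.
have [a [[n [_ [Nn [k [c [Kk C1c ->]]] eav]]] na]] := L1_essential nv.
have kc0 : k + c = 0 by apply: Q0; exists a, n, k, c; split.
move: na; rewrite (v_out (x := n)) ?eqxx // eav kc0 addr0.
by have := psi_L1 Nn (sub0 hK) (sub0 hC1); rewrite (hom0 ht) !addr0.
Qed.
End OutsideImage.

Lemma psi_bijective : bijective psi.
Proof.
apply: (bij_essential_image Einj hpsi (hom_inj_ker hpsi psi_ker)).
move=> v nv; apply: contrapT => hno; move/eqP: nv; apply.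
apply: outside_image_zero => a x eav; apply/eqP; apply: contrapT => /negP na.
by apply: hno; exists a; split => //; exists x.
Qed.

Lemma rho_idem_mod_rad : rad (fun x => rho (rho x) - rho x).
Proof.
apply: (@rad_eq_essential _ _ (rho \o rho) rho L1) => //; first exact: hom_comp.
by move=> _ [n [_ [Nn [k [c [Kk C1c ->]]] ->]]]; rewrite /= rho_L1 // rho_C1.
Qed.

(* On [L1 = N + K + C1] both [t] and [psi rho] send [n + k + c] to [t c]. *)
Lemma block_factor : rad_eq t (psi \o rho).
Proof.
apply: (rad_eq_essential ht (hom_comp hpsi hrho) L1_essential).
move=> _ [n [_ [Nn [k [c [Kk C1c ->]]] ->]]].
rewrite /= rho_L1 // /psi rho_C1 // [RHS]addrC subrK !(homD ht).
have -> : t n = 0 by rewrite /t /= (pZ_N Nn) (hom0 hw) (hom0 hpZ).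
by case: Kk => _ ->; rewrite !add0r.
Qed.
End Projection.

Lemma complement_block_factor : exists psi rho,
  [/\ is_hom psi, bijective psi, is_hom rho, rad (fun x => rho (rho x) - rho x)
    & rad_eq t (psi \o rho)].
Proof.
have [rho [hrho erho]] := projection_exists Einj hC1 (submod_sum hN hK) C1_indep.
exists (fun x => x + (t (rho x) - rho x)), rho; split => //.
- by apply: hom_add => //; apply: hom_sub => //; apply: hom_comp.
- exact: psi_bijective hrho erho.
- exact: rho_idem_mod_rad hrho erho.
- exact: block_factor hrho erho.
Qed.
End Complement.

Lemma square_free_block_factor : exists psi rho,
  [/\ is_hom psi, bijective psi, is_hom rho, rad (fun x => rho (rho x) - rho x)
    & rad_eq t (psi \o rho)].
Proof.
have [C [hC CZ iCK KC_ess]] := complement_exists hK hZ.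
exact: complement_block_factor hC CZ iCK KC_ess.
Qed.
End SquareFreeBlock.

Section Decomposition.
Variables (R : pzRingType) (E : lmodType R).

Record decomposition := Decomposition {
  partX : E -> Prop; partY : E -> Prop; partZ : E -> Prop;
  projX : E -> E; projY : E -> E; projZ : E -> E;
  isoXY : E -> E; isoYX : E -> E;
  partX_submod : is_submod partX;
  partY_submod : is_submod partY;
  partZ_submod : is_submod partZ;
  parts_essential : essential (sum_sub (sum_sub partX partY) partZ);
  projX_hom : is_hom projX; projY_hom : is_hom projY; projZ_hom : is_hom projZ;
  projX_sum : forall x y z, partX x -> partY y -> partZ z -> projX (x + y + z) = x;
  projY_sum : forall x y z, partX x -> partY y -> partZ z -> projY (x + y + z) = y;
  projZ_sum : forall x y z, partX x -> partY y -> partZ z -> projZ (x + y + z) = z;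
  isoXY_hom : is_hom isoXY; isoYX_hom : is_hom isoYX;
  isoXY_into : forall x, partX x -> partY (isoXY x);
  isoYX_into : forall y, partY y -> partX (isoYX y);
  isoYX_XY : forall x, partX x -> isoYX (isoXY x) = x;
  isoXY_YX : forall y, partY y -> isoXY (isoYX y) = y;
  partZ_square_free : square_free partZ }.

Hypothesis Einj : injective_module E.
Implicit Types (X Y Z : E -> Prop).

Lemma projections3_exist X Y Z : is_submod X -> is_submod Y -> is_submod Z ->
  indep X Y -> indep Z (sum_sub X Y) -> exists pX pY pZ : E -> E,
  [/\ is_hom pX, is_hom pY, is_hom pZ &
    forall x y z, X x -> Y y -> Z z ->
      [/\ pX (x + y + z) = x, pY (x + y + z) = y & pZ (x + y + z) = z]].
Proof.
move=> hX hY hZ iXY iZN.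
have iUVZ U V : is_submod U -> is_submod V -> indep U V ->
    (forall u, U u -> sum_sub X Y u) -> (forall v, V v -> sum_sub X Y v) ->
    indep U (sum_sub V Z).
  move=> hU hV iUV UN VN u Uu [v [z [Vv Zz ev]]].
  have z0 : z = 0.
    apply: iZN => //; rewrite (_ : z = u - v); last by rewrite ev addrC addKr.
    by apply: subB; [apply: submod_sum | apply: UN | apply: VN].
  by apply: iUV => //; rewrite ev z0 addr0.
have [pX [hpX epX]] := projection_exists Einj hX (submod_sum hY hZ)
  (iUVZ _ _ hX hY iXY (fun x Xx => sum_subl hY Xx) (fun y Yy => sum_subr hX Yy)).
have [pY [hpY epY]] := projection_exists Einj hY (submod_sum hX hZ)
  (iUVZ _ _ hY hX (indep_sym iXY) (fun y Yy => sum_subr hX Yy) (fun x Xx => sum_subl hY Xx)).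
have [pZ [hpZ epZ]] := projection_exists Einj hZ (submod_sum hX hY) iZN.
exists pX, pY, pZ; split => // x y z Xx Yy Zz; split.
- by rewrite -addrA epX //; exists y, z.
- by rewrite [x + y]addrC -addrA epY //; exists x, z.
- by rewrite addrC epZ //; exists x, y.
Qed.

Lemma partial_iso_homs (S : E * E -> Prop) : partial_iso S -> exists f g : E -> E,
  [/\ is_hom f, is_hom g, forall x, domain S x -> S (x, f x) &
    forall y, range S y -> S (g y, y)].
Proof.
move=> pS; have [hS _ _ _] := pS.
have hD := domain_submod hS; have hR := range_submod hS.
pose f0 (x : E) := xget 0 (fun y => S (x, y)).
pose g0 (y : E) := xget 0 (fun x => S (x, y)).
have f0S x : domain S x -> S (x, f0 x) by move=> /(xgetPex 0).
have g0S y : range S y -> S (g0 y, y) by move=> /(xgetPex 0).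
have [f [hf ef]] : exists f, is_hom f /\ forall x, domain S x -> f x = f0 x.
  apply: hom_extend => // a x x' Dx Dx'.
  apply: (partial_iso_fun pS (f0S _ (subD hD (subZ a hD Dx) Dx'))).
  exact: (subD hS (subZ a hS (f0S _ Dx)) (f0S _ Dx')).
have [g [hg eg]] : exists g, is_hom g /\ forall y, range S y -> g y = g0 y.
  apply: hom_extend => // a y y' Ry Ry'.
  apply: (partial_iso_inj pS (g0S _ (subD hR (subZ a hR Ry) Ry'))).
  exact: (subD hS (subZ a hS (g0S _ Ry)) (g0S _ Ry')).
by exists f, g; split => // [x Dx | y Ry]; [rewrite ef //; apply: f0S | rewrite eg //; apply: g0S].
Qed.

Lemma decomposition_exists : inhabited decomposition.
Proof.
have [S [pS Smax]] := @partial_iso_maximal _ E.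
have [hS _ _ iXY] := pS.
have hX := domain_submod hS; have hY := range_submod hS.
have hT : is_submod (fun _ : E => True) by split.
have [Z [hZ _ iZN ZN_ess]] := complement_exists (submod_sum hX hY) hT.
have [pX [pY [pZ [hpX hpY hpZ epr]]]] := projections3_exist hX hY hZ iXY iZN.
have [f [g [hf hg fS gS]]] := partial_iso_homs pS.
have fY x : domain S x -> range S (f x) by exists x; apply: fS.
have gX y : range S y -> domain S (g y) by exists y; apply: gS.
constructor; apply: (@Decomposition (domain S) (range S) Z pX pY pZ f g) => //.
- by move=> v nv; apply: ZN_ess.
- by move=> x y z Xx Yy Zz; have [] := epr x y z Xx Yy Zz.
- by move=> x y z Xx Yy Zz; have [] := epr x y z Xx Yy Zz.
- by move=> x y z Xx Yy Zz; have [] := epr x y z Xx Yy Zz.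
- by move=> x Dx; apply: (partial_iso_inj pS (gS _ (fY _ Dx)) (fS _ Dx)).
- by move=> y Ry; apply: (partial_iso_fun pS (fS _ (gX _ Ry)) (gS _ Ry)).
- exact: maximal_square_free pS Smax hZ iZN.
Qed.
End Decomposition.

Section Invariance.
Variables (R : pzRingType) (E : lmodType R) (M : E -> Prop).
Hypotheses (Einj : injective_module E) (sM : is_submod M).
Hypothesis Minv : forall s, is_hom s -> bijective s -> forall m, M m -> M (s m).
Implicit Types (f g j p s t u v w : E -> E).

Definition preserves f := is_hom f /\ forall m, M m -> M (f m).

Lemma preserves_unit s : is_hom s -> bijective s -> preserves s.
Proof. by move=> hs bs; split => //; apply: Minv. Qed.
Lemma preserves_id : preserves id. Proof. by split. Qed.
Lemma preserves_ext f g : (forall x, f x = g x) -> preserves f -> preserves g.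
Proof.
by move=> e [hf Mf]; split; [apply: hom_ext hf | move=> m Mm; rewrite -e; auto].
Qed.
Lemma preserves_add f g : preserves f -> preserves g -> preserves (fun x => f x + g x).
Proof.
by move=> [hf Mf] [hg Mg]; split; [apply: hom_add | move=> m Mm; apply: subD; auto].
Qed.
Lemma preserves_opp f : preserves f -> preserves (fun x => - f x).
Proof. by move=> [hf Mf]; split; [apply: hom_opp | move=> m Mm; apply: subN; auto]. Qed.
Lemma preserves_sub f g : preserves f -> preserves g -> preserves (fun x => f x - g x).
Proof. by move=> tf tg; apply: preserves_add => //; apply: preserves_opp. Qed.
Lemma preserves_comp f g : preserves f -> preserves g -> preserves (f \o g).
Proof. by move=> [hf Mf] [hg Mg]; split; [apply: hom_comp | move=> m Mm /=; auto]. Qed.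
Lemma preserves_scale (c : R) f : central c -> preserves f ->
  preserves (fun x => c *: f x).
Proof.
move=> cc [hf Mf]; split; last by move=> m Mm; apply: subZ; auto.
exact: (hom_comp (hom_scale cc) hf).
Qed.

(* [j = (1 + j) - 1] with [1 + j] an automorphism. *)
Lemma preserves_rad j : rad j -> preserves j.
Proof.
move=> Jj; have [hj _] := Jj.
have t1 : preserves (fun x => x + j x).
  by apply: preserves_unit; [apply: hom_add | apply: rad_unit].
by apply: preserves_ext (preserves_sub t1 preserves_id) => x /=; rewrite addrC addKr.
Qed.

Lemma preserves_rad_eq f g : preserves g -> is_hom f -> rad_eq f g -> preserves f.
Proof.
move=> tg hf Jfg; apply: preserves_ext (preserves_add tg (preserves_rad Jfg)) => x.
by rewrite addrC subrK.
Qed.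

(* If [f^2] is in the radical then [1 + f] is a unit (inverse [1 - f]
   modulo the radical), hence [f] preserves [M]. *)
Lemma preserves_nil f : is_hom f -> rad (f \o f) -> preserves f.
Proof.
move=> hf Jff.
have u : preserves (fun x => x + f x).
  apply: preserves_unit; first exact: hom_add.
  apply: (@unit_mod_rad _ _ Einj _ (fun x => x - f x)
     (fun x => - f (f x)) (fun x => - f (f x))) => //; try exact: rad_opp.
  - exact: hom_add.
  - exact: hom_sub.
  - by move=> x; rewrite (homB hf) addrA subrK.
  - by move=> x; rewrite (homD hf) opprD addrA addrK.
by apply: preserves_ext (preserves_sub u preserves_id) => x /=; rewrite addrC addKr.
Qed.

Lemma preserves_offdiag f g s : is_hom f -> is_hom g -> is_hom s -> rad (g \o f) ->
  preserves (f \o s \o g).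
Proof.
move=> hf hg hs J1; apply: preserves_nil; first by do 2 apply: hom_comp.
have := rad_compr (rad_compl J1 (hom_comp hf hs)) (hom_comp hs hg).
by apply: rad_ext.
Qed.

(* For central [a b] with [a b = 1], the maps [a + (1 - a) p] and
   [b + (1 - b) p] are mutually inverse up to a multiple of [p^2 - p]. *)
Lemma affine_idem_comp p a b x : is_hom p -> central a -> central b -> a * b = 1 ->
  a *: (b *: x + (1 - b) *: p x) + (1 - a) *: p (b *: x + (1 - b) *: p x)
  = x + ((1 - a) * (1 - b)) *: (p (p x) - p x).
Proof.
move=> hp ha hb ab.
rewrite (homD hp) !(homZ hp) !scalerDr !scalerA ab scale1r.
have key : a * (1 - b) + (1 - a) * b = - ((1 - a) * (1 - b)).
  by rewrite !mulrBr !mulrBl !mulr1 !mul1r ab opprB opprB addrC.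
rewrite -!addrA; congr (_ + _).
by rewrite addrA -scalerDl key scaleNr scalerN addrC.
Qed.

(* A central scalar [lam] such that [lam] and [1 - lam] have central
   inverses; for an algebra over a field this is where three elements are needed. *)
Section QuasiIdempotents.
Variables (lam lam_inv mu_inv : R).
Hypotheses (clam : central lam) (clam_inv : central lam_inv) (cmu_inv : central mu_inv).
Hypotheses (lamV : lam * lam_inv = 1) (muV : (1 - lam) * mu_inv = 1).

(* An endomorphism idempotent modulo the radical preserves [M]:
   [v = lam + (1 - lam) p] is invertible modulo the radical, hence a unit,
   and [p = (1 - lam)^-1 (v - lam)]. *)
Lemma preserves_idem_mod_rad p : is_hom p -> rad (fun x => p (p x) - p x) ->
  preserves p.
Proof.
move=> hp Jp.
have c1 : central (1 - lam) by apply: centralB => //; apply: central1.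
have hv a : central a -> central (1 - a) -> is_hom (fun x => a *: x + (1 - a) *: p x).
  move=> ha ha1; apply: hom_add; first exact: hom_scale.
  exact: (hom_comp (hom_scale ha1) hp).
have Jr r : central r -> rad (fun x => r *: (p (p x) - p x)).
  by move=> hr; apply: (rad_compl Jp (hom_scale hr)).
have cinv1 : central (1 - lam_inv) by apply: centralB => //; apply: central1.
have tv : preserves (fun x => lam *: x + (1 - lam) *: p x).
  apply: preserves_unit; first exact: hv.
  apply: (@unit_mod_rad _ _ Einj _ (fun x => lam_inv *: x + (1 - lam_inv) *: p x)
       (fun x => ((1 - lam) * (1 - lam_inv)) *: (p (p x) - p x))
       (fun x => ((1 - lam_inv) * (1 - lam)) *: (p (p x) - p x))).
  - exact: hv.
  - exact: hv.
  - by apply: Jr; apply: centralM.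
  - by apply: Jr; apply: centralM.
  - by move=> x; apply: affine_idem_comp.
  - by move=> x; apply: affine_idem_comp => //; rewrite -clam.
have := preserves_scale cmu_inv (preserves_sub tv (preserves_scale clam preserves_id)).
apply: preserves_ext => x /=.
by rewrite addrAC subrr add0r scalerA cmu_inv muV scale1r.
Qed.

Lemma preserves_square_free_block (N Z : E -> Prop) (pZ w : E -> E) :
  is_submod N -> is_submod Z -> essential (sum_sub N Z) -> is_hom pZ ->
  (forall n z, N n -> Z z -> pZ (n + z) = z) -> square_free Z -> is_hom w ->
  preserves (pZ \o w \o pZ).
Proof.
move=> hN hZ eNZ hpZ epZ sqZ hw.
have [psi [rho [hpsi bpsi hrho rho_idem t_eq]]] :=
  square_free_block_factor Einj hN hZ eNZ hpZ epZ sqZ hw.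
apply: preserves_rad_eq t_eq; last by do 2 apply: hom_comp.
exact: preserves_comp (preserves_unit hpsi bpsi) (preserves_idem_mod_rad hrho rho_idem).
Qed.

(* Every endomorphism [w] preserves [M]: modulo the radical, [w] is the sum
   of its nine blocks [pU w pV] (U, V among X, Y, Z) with respect to a
   decomposition.  The off-diagonal blocks are nilpotent modulo the radical;
   the [X]- and [Y]-diagonal blocks factor through off-diagonal ones via the
   isomorphism [X ~ Y]; the [Z]-block is handled by square-freeness. *)
Section Blocks.
Variable D : decomposition E.
Local Notation X := (partX D).
Local Notation Y := (partY D).
Local Notation Z := (partZ D).
Local Notation pX := (projX D).
Local Notation pY := (projY D).
Local Notation pZ := (projZ D).
Local Notation f := (isoXY D).
Local Notation g := (isoYX D).
Let hpX := projX_hom D.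
Let hpY := projY_hom D.
Let hpZ := projZ_hom D.
Let X0 := sub0 (partX_submod D).
Let Y0 := sub0 (partY_submod D).
Let Z0 := sub0 (partZ_submod D).

Let proj_parts x y z : X x -> Y y -> Z z ->
  [/\ pX (x + y + z) = x, pY (x + y + z) = y & pZ (x + y + z) = z].
Proof. by move=> Xx Yy Zz; rewrite projX_sum // projY_sum // projZ_sum. Qed.
Let onX x : X x -> [/\ pX x = x, pY x = 0 & pZ x = 0].
Proof. by move=> Xx; have := proj_parts Xx Y0 Z0; rewrite !addr0. Qed.
Let onY y : Y y -> [/\ pX y = 0, pY y = y & pZ y = 0].
Proof. by move=> Yy; have := proj_parts X0 Yy Z0; rewrite add0r addr0. Qed.
Let onZ z : Z z -> [/\ pX z = 0, pY z = 0 & pZ z = z].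
Proof. by move=> Zz; have := proj_parts X0 Y0 Zz; rewrite !add0r. Qed.

Let agree u v : is_hom u -> is_hom v ->
  (forall x y z, X x -> Y y -> Z z -> u (x + y + z) = v (x + y + z)) -> rad_eq u v.
Proof.
move=> hu hv h; apply: (rad_eq_essential hu hv (parts_essential D)).
by move=> _ [_ [z [[x [y [Xx Yy ->]]] Zz ->]]]; apply: h.
Qed.

Let rad_vanish u : is_hom u ->
  (forall x y z, X x -> Y y -> Z z -> u (x + y + z) = 0) -> rad u.
Proof.
move=> hu h; have := agree hu (@hom_zero _ E) h.
by apply: rad_ext => x; rewrite subr0.
Qed.

Let offdiag (P Q : E -> E) s : is_hom P -> is_hom Q -> is_hom s ->
  (forall x y z, X x -> Y y -> Z z -> Q (P (x + y + z)) = 0) -> preserves (P \o s \o Q).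
Proof.
by move=> hP hQ hs h; apply: preserves_offdiag => //; apply: rad_vanish => //; apply: hom_comp.
Qed.

Let offXY s : is_hom s -> preserves (pX \o s \o pY).
Proof. by move=> hs; apply: offdiag => // x y z Xx Yy Zz; rewrite projX_sum //; case: (onX Xx). Qed.
Let offXZ s : is_hom s -> preserves (pX \o s \o pZ).
Proof. by move=> hs; apply: offdiag => // x y z Xx Yy Zz; rewrite projX_sum //; case: (onX Xx). Qed.
Let offYX s : is_hom s -> preserves (pY \o s \o pX).
Proof. by move=> hs; apply: offdiag => // x y z Xx Yy Zz; rewrite projY_sum //; case: (onY Yy). Qed.
Let offYZ s : is_hom s -> preserves (pY \o s \o pZ).
Proof. by move=> hs; apply: offdiag => // x y z Xx Yy Zz; rewrite projY_sum //; case: (onY Yy). Qed.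
Let offZX s : is_hom s -> preserves (pZ \o s \o pX).
Proof. by move=> hs; apply: offdiag => // x y z Xx Yy Zz; rewrite projZ_sum //; case: (onZ Zz). Qed.
Let offZY s : is_hom s -> preserves (pZ \o s \o pY).
Proof. by move=> hs; apply: offdiag => // x y z Xx Yy Zz; rewrite projZ_sum //; case: (onZ Zz). Qed.

(* [Phi = f pX] and [Psi = g pY] transport [X] to [Y] and back; they square
   to zero modulo the radical. *)
Let Phi := f \o pX.
Let Psi := g \o pY.
Let hPhi : is_hom Phi := hom_comp (isoXY_hom D) hpX.
Let hPsi : is_hom Psi := hom_comp (isoYX_hom D) hpY.

Let preserves_Phi : preserves Phi.
Proof.
apply: preserves_nil => //; apply: rad_vanish; first exact: hom_comp.
move=> x y z Xx Yy Zz; rewrite /Phi /= projX_sum //.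
by have [-> _ _] := onY (isoXY_into Xx); rewrite (hom0 (isoXY_hom D)).
Qed.
Let preserves_Psi : preserves Psi.
Proof.
apply: preserves_nil => //; apply: rad_vanish; first exact: hom_comp.
move=> x y z Xx Yy Zz; rewrite /Psi /= projY_sum //.
by have [_ -> _] := onX (isoYX_into Yy); rewrite (hom0 (isoYX_hom D)).
Qed.

(* [pX s pX = (pX (s pX Psi) pY) Phi] modulo the radical, and symmetrically. *)
Let diagX s : is_hom s -> preserves (pX \o s \o pX).
Proof.
move=> hs; have hs' := hom_comp (hom_comp hs hpX) hPsi.
apply: (preserves_rad_eq (preserves_comp (offXY hs') preserves_Phi)).
  exact: hom_comp (hom_comp hpX hs) hpX.
apply: agree => [||x y z Xx Yy Zz].
- exact: hom_comp (hom_comp hpX hs) hpX.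
- exact: hom_comp (hom_comp (hom_comp hpX hs') hpY) hPhi.
rewrite /Phi /Psi /= projX_sum //; have fXY := isoXY_into Xx.
by have [_ e1 _] := onY fXY; rewrite !e1 isoYX_XY //; case: (onX Xx) => ->.
Qed.
Let diagY s : is_hom s -> preserves (pY \o s \o pY).
Proof.
move=> hs; have hs' := hom_comp (hom_comp hs hpY) hPhi.
apply: (preserves_rad_eq (preserves_comp (offYX hs') preserves_Psi)).
  exact: hom_comp (hom_comp hpY hs) hpY.
apply: agree => [||x y z Xx Yy Zz].
- exact: hom_comp (hom_comp hpY hs) hpY.
- exact: hom_comp (hom_comp (hom_comp hpY hs') hpX) hPsi.
rewrite /Phi /Psi /= projY_sum //; have gYX := isoYX_into Yy.
by have [e1 _ _] := onX gYX; rewrite !e1 isoXY_YX //; case: (onY Yy) => _ ->.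
Qed.

Let diagZ s : is_hom s -> preserves (pZ \o s \o pZ).
Proof.
move=> hs; apply: (preserves_square_free_block _ (partZ_submod D) _ hpZ _
  (@partZ_square_free _ _ D) hs).
- exact: submod_sum (partX_submod D) (partY_submod D).
- exact: parts_essential.
- by move=> _ z [x [y [Xx Yy ->]]] Zz; apply: projZ_sum.
Qed.

(* Since [1 = pX + pY + pZ] modulo the radical, [w Q] preserves [M] as soon
   as its three blocks [pU w Q] do. *)
Let column w (Q : E -> E) : is_hom w -> is_hom Q -> preserves (pX \o w \o Q) ->
  preserves (pY \o w \o Q) -> preserves (pZ \o w \o Q) -> preserves (w \o Q).
Proof.
move=> hw hQ tX tY tZ; have hwQ := hom_comp hw hQ.
have hsum : is_hom (fun x => pX x + pY x + pZ x).
  by apply: hom_add => //; apply: hom_add.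
have id_sum : rad_eq id (fun x => pX x + pY x + pZ x).
  apply: (agree (@hom_id _ E) hsum) => x y z Xx Yy Zz.
  by rewrite /= projX_sum // projY_sum // projZ_sum.
apply: (preserves_rad_eq (g := (fun x => pX x + pY x + pZ x) \o (w \o Q))) => //.
  exact: preserves_add (preserves_add tX tY) tZ.
exact: rad_eq_comp (@hom_id _ E) hwQ id_sum (rad_eq_refl hwQ).
Qed.

(* [w = w pX + w pY + w pZ] modulo the radical. *)
Lemma preserves_decomposed w : is_hom w -> preserves w.
Proof.
move=> hw.
have cX : preserves (w \o pX) by apply: column => //; [apply: diagX | apply: offYX | apply: offZX].
have cY : preserves (w \o pY) by apply: column => //; [apply: offXY | apply: diagY | apply: offZY].
have cZ : preserves (w \o pZ) by apply: column => //; [apply: offXZ | apply: offYZ | apply: diagZ].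
apply: (preserves_rad_eq (preserves_add (preserves_add cX cY) cZ) hw).
apply: agree => [||x y z Xx Yy Zz]; first by [].
  by apply: hom_add; [apply: hom_add|]; apply: hom_comp.
by rewrite /= projX_sum // projY_sum // projZ_sum // !(homD hw).
Qed.
End Blocks.

Lemma preserves_all w : is_hom w -> preserves w.
Proof. by have [D] := decomposition_exists Einj; apply: preserves_decomposed. Qed.
End QuasiIdempotents.
End Invariance.

Lemma injective_module_iso (R : pzRingType) (M E : lmodType R) (i : M -> E) :
  is_hom i -> injective i -> (forall e, exists m, e = i m) ->
  injective_module E -> injective_module M.
Proof.
move=> hi ii onto Einj M' N' j f hj ij hf.
have [||| g' [hg' eg']] := @Einj M' N' j (i \o f) => //.
  by move=> k x y /=; rewrite hf (homD hi) (homZ hi).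
pose g n := proj1_sig (cid (onto (g' n))).
have eg n : g' n = i (g n) by exact: (proj2_sig (cid (onto (g' n)))).
exists g; split => [k x y | x]; apply: ii; rewrite -eg ?eg'//.
by rewrite hg' !eg (homD hi) (homZ hi).
Qed.

(* A ring [S] whose regular module [S^o] is automorphism-invariant is
   self-injective, provided [S] has a central element [lam] with [lam] and
   [1 - lam] invertible by central elements: the image of [S] in its injective
   hull [E] is invariant under every endomorphism of [E], in particular under
   the extension of [r |-> r e], which sends [1] to [e]. *)
Theorem regular_self_injective (S : pzRingType) (lam lam_inv mu_inv : S) :
  central lam -> central lam_inv -> central mu_inv ->
  lam * lam_inv = 1 -> (1 - lam) * mu_inv = 1 ->
  automorphism_invariant (S^o) -> injective_module (S^o).
Proof.
move=> clam clam_inv cmu_inv lamV muV [E [i [[Einj [hi ii _]] inv]]].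
pose M e := exists r, e = i r.
have sM : is_submod M.
  split; first by exists 0; rewrite (hom0 hi).
  - by move=> _ _ [x ->] [y ->]; exists (x + y); rewrite (homD hi).
  - by move=> k _ [x ->]; exists (k *: x); rewrite (homZ hi).
have Minv s : is_hom s -> bijective s -> forall m, M m -> M (s m).
  by move=> hs bs _ [x ->]; have [y e] := inv s (conj hs bs) x; exists y.
apply: (injective_module_iso hi ii) => // e.
have [||| w [hw ew]] := @Einj (S^o) E i (fun r : S^o => (r : S) *: e) => //.
  by move=> k x y; rewrite scalerDl scalerA.
have [_ Mw] := preserves_all Einj sM Minv clam clam_inv cmu_inv lamV muV hw.
have [r er] := Mw (i 1) (ex_intro _ 1 erefl).
by exists r; rewrite -er ew scale1r.
Qed.

Lemma field_third_element (F : fieldType) :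
  (exists a b c : F, [/\ a != b, a != c & b != c]) -> exists lam : F, lam != 0 /\ 1 - lam != 0.
Proof.
move=> [a [b [c [ab ac bc]]]]; exists ((a - c) / (b - c)).
have bc0 : b - c != 0 by rewrite subr_eq0.
split; first by rewrite mulf_neq0 ?invr_eq0 // subr_eq0.
rewrite subr_eq0; apply: contraNneq ab => h.
have : a - c = b - c by rewrite -[b - c]mul1r h mulfVK.
by move/eqP; rewrite (can_eq (subrK c)).
Qed.

Lemma scalar_central (F : fieldType) (A : algType F) (l : F) : central ((l%:A : A) : A^c).
Proof.
move=> r; change ((r : A) * (l%:A : A) = (l%:A : A) * (r : A)).
by rewrite mulr_algl mulr_algr.
Qed.

Lemma scalar_mul (F : fieldType) (A : algType F) (l1 l2 : F) :
  ((l1%:A : A) : A^c) * ((l2%:A : A) : A^c) = ((l1 * l2)%:A : A).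
Proof.
change ((l2%:A : A) * (l1%:A : A) = (l1 * l2)%:A).
by rewrite mulr_algr scalerA mulrC.
Qed.

Theorem corollary7 (F : fieldType) (A : algType F) :
  (exists a b c : F, [/\ a != b, a != c & b != c]) ->
  automorphism_invariant (regular_right_module A) ->
  injective_module (regular_right_module A).
Proof.
move=> /field_third_element [lam [lam0 lam1]].
pose scalar (l : F) : A^c := (l%:A : A).
have lamV : scalar lam * scalar lam^-1 = 1 by rewrite scalar_mul divff // scale1r.
have muV : (1 - scalar lam) * scalar (1 - lam)^-1 = 1.
  by rewrite (_ : 1 - _ = scalar (1 - lam)) ?scalar_mul ?divff ?scale1r // /scalar scalerBl scale1r.
exact: (@regular_self_injective (A^c) _ _ _ (@scalar_central _ A lam)
  (@scalar_central _ A lam^-1) (@scalar_central _ A (1 - lam)^-1) lamV muV).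
Qed.
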